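(* Let $c$ and $\gamma$ be constants, $\mathcal{Y}$ a tiny class, and $t:\mathbb{N}\to\mathbb{R}$ an increasing unbounded function with $t(n)\le n$ for all $n$. Let $L\subseteq\mathbb{N}$ be an infinite $t$-sparse set, and for every $\ell\in L$ let $\mathcal{M}_\ell$ be a set of $\ell$-vertex monotone $(c,\mathcal{Y},t)$-tiny graphs with $|\mathcal{M}_\ell|\le\gamma^{t(\ell)}$. Then $\mathrm{Mon}\big(\bigcup_{\ell\in L}\mathcal{M}_\ell\big)$ is a monotone tiny class.
   Context: A class (set of graphs closed under isomorphism) is monotone if closed under subgraphs; it is tiny if hereditary (closed under induced subgraphs) and for some constant $\beta$ it contains at most $\beta^n$ unlabeled $n$-vertex graphs for every $n$. $\mathrm{Mon}(\mathcal{C})$ is the smallest monotone class containing $\mathcal{C}$. $L$ is $t$-sparse if there is no pair $x\ne y$ in $L$ with $t(y)\le x\le y$. For a graph $G$, $s_k(G)$ is the number of unlabeled $k$-vertex subgraphs of $G$. An $n$-vertex graph $G$ is monotone $(c,\mathcal{Y},t)$-tiny if (1) for every integer $1\le k\le t(n)$, every $k$-vertex subgraph of $G$ belongs to $\mathcal{Y}$, and (2) for every integer $t(n)<k\le n$, $s_k(G)\le c^k$. *)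

From Stdlib Require Import Reals ClassicalEpsilon.
From mathcomp Require Import all_boot.
Set Implicit Arguments. Unset Strict Implicit. Unset Printing Implicit Defensive.

Definition sgraph (n : nat) :=
  { e : {ffun 'I_n * 'I_n -> bool} |
      [forall x, ~~ e (x, x)] && [forall x, forall y, e (x, y) == e (y, x)] }.

Definition adj (n : nat) (G : sgraph n) (x y : 'I_n) : bool := sval G (x, y).

Definition isob (n m : nat) (G : sgraph n) (H : sgraph m) : bool :=
  (n == m) && [exists f : {ffun 'I_n -> 'I_m},
    injectiveb f && [forall x, forall y, adj G x y == adj H (f x) (f y)]].

Definition subgraphb (k n : nat) (H : sgraph k) (G : sgraph n) : bool :=
  [exists f : {ffun 'I_k -> 'I_n},
    injectiveb f && [forall x, forall y, adj H x y ==> adj G (f x) (f y)]].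

Definition inducedb (k n : nat) (H : sgraph k) (G : sgraph n) : bool :=
  [exists f : {ffun 'I_k -> 'I_n},
    injectiveb f && [forall x, forall y, adj H x y == adj G (f x) (f y)]].

Definition gclass := forall n : nat, sgraph n -> Prop.

Definition iso_closed (C : gclass) : Prop :=
  forall n m (G : sgraph n) (H : sgraph m), isob G H -> C n G -> C m H.

Definition is_class (C : gclass) : Prop := iso_closed C.

Definition hereditary (C : gclass) : Prop :=
  is_class C /\
  forall n k (G : sgraph n) (H : sgraph k), inducedb H G -> C n G -> C k H.

Definition monotone (C : gclass) : Prop :=
  is_class C /\
  forall n k (G : sgraph n) (H : sgraph k), subgraphb H G -> C n G -> C k H.

Definition pb (P : Prop) : bool :=
  if excluded_middle_informative P then true else false.

Definition unl_count (C : gclass) (n : nat) : nat :=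
  #|equivalence_partition (@isob n n) [set G : sgraph n | pb (C n G)]|.

Definition tiny (C : gclass) : Prop :=
  hereditary C /\
  exists beta : R, forall n : nat, Rle (INR (unl_count C n)) (pow beta n).

Definition Mon (C : gclass) : gclass :=
  fun n G => forall D : gclass, monotone D ->
    (forall m (H : sgraph m), C m H -> D m H) -> D n G.

Definition s_k (k n : nat) (G : sgraph n) : nat :=
  #|equivalence_partition (@isob k k) [set H : sgraph k | subgraphb H G]|.

Definition monotone_tiny_graph (c : R) (Y : gclass) (t : nat -> R)
  (n : nat) (G : sgraph n) : Prop :=
  (forall k (H : sgraph k), (1 <= k)%N -> Rle (INR k) (t n) -> subgraphb H G -> Y k H)
  /\ (forall k : nat, Rlt (t n) (INR k) -> (k <= n)%N -> Rle (INR (s_k k G)) (pow c k)).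

Definition t_sparse (t : nat -> R) (L : nat -> Prop) : Prop :=
  forall x y : nat, L x -> L y -> x <> y -> ~ (Rle (t y) (INR x) /\ (x <= y)%N).

(* Let U be the class of all graphs G in M_l for l in L. Since Mon U is the
   class of subgraphs of members of U, an n-vertex graph H of Mon U is a
   subgraph of some G in M_l with n <= l, and one of two cases occurs:
   - n <= t(l): H lies in Y, because G is monotone (c,Y,t)-tiny;
   - t(l) < n <= l: by t-sparseness at most one l0 in L lies in this window,
     and H is one of the s_n(G) <= c^n unlabeled n-vertex subgraphs of one of
     the |M_l0| <= gamma^t(l0) graphs G in M_l0.
   Hence Mon U has at most |beta|^n + K (gamma+1)^n |c|^n unlabeled n-vertex
   graphs (beta the growth constant of Y, K a constant), which is at most
   (|beta| + K (gamma+1) |c|)^n. *)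

From Stdlib Require Import Reals Lra Psatz ClassicalEpsilon Classical.
From mathcomp Require Import all_boot.
Set Implicit Arguments. Unset Strict Implicit.

Lemma subgraph_refl n (G : sgraph n) : subgraphb G G.
Proof.
apply/existsP; exists [ffun x => x]; apply/andP; split.
  by apply/injectiveP => x y; rewrite !ffunE.
by apply/forallP => x; apply/forallP => y; rewrite !ffunE implybb.
Qed.

Lemma subgraph_trans k m n (H : sgraph k) (K : sgraph m) (G : sgraph n) :
  subgraphb H K -> subgraphb K G -> subgraphb H G.
Proof.
move=> /existsP [f /andP [/injectiveP f_inj /forallP f_hom]].
move=> /existsP [g /andP [/injectiveP g_inj /forallP g_hom]].
apply/existsP; exists [ffun x => g (f x)]; apply/andP; split.
  by apply/injectiveP => x y; rewrite !ffunE => /g_inj /f_inj.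
apply/forallP => x; apply/forallP => y; rewrite !ffunE; apply/implyP => Hxy.
have /forallP/(_ y)/implyP/(_ Hxy) Kxy := f_hom x.
by have /forallP/(_ (f y))/implyP/(_ Kxy) := g_hom (f x).
Qed.

Lemma subgraph_size k n (H : sgraph k) (G : sgraph n) :
  subgraphb H G -> (k <= n)%N.
Proof.
move=> /existsP [f /andP [/injectiveP f_inj _]].
by have := leq_card f f_inj; rewrite !card_ord.
Qed.

Lemma induced_subgraph k n (H : sgraph k) (G : sgraph n) :
  inducedb H G -> subgraphb H G.
Proof.
move=> /existsP [f /andP [f_inj /forallP f_hom]].
apply/existsP; exists f; rewrite f_inj; apply/forallP => x; apply/forallP => y.
by have /forallP/(_ y)/eqP -> := f_hom x; rewrite implybb.
Qed.

Lemma iso_refl n (G : sgraph n) : isob G G.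
Proof.
apply/andP; split => //; apply/existsP; exists [ffun x => x]; apply/andP; split.
  by apply/injectiveP => x y; rewrite !ffunE.
by apply/forallP => x; apply/forallP => y; rewrite !ffunE.
Qed.

Lemma iso_sym n m (G : sgraph n) (H : sgraph m) : isob G H -> isob H G.
Proof.
case/andP => /eqP e; subst m => /existsP [f /andP [/injectiveP f_inj /forallP f_hom]].
apply/andP; split => //; apply/existsP; exists [ffun x => invF f_inj x].
apply/andP; split.
  by apply/injectiveP => x y; rewrite !ffunE; apply: (can_inj (f_invF f_inj)).
apply/forallP => x; apply/forallP => y; rewrite !ffunE.
by have /forallP/(_ (invF f_inj y))/eqP := f_hom (invF f_inj x); rewrite !f_invF => ->.
Qed.

Lemma iso_trans n (G H K : sgraph n) : isob G H -> isob H K -> isob G K.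
Proof.
case/andP => _ /existsP [f /andP [/injectiveP f_inj /forallP f_hom]].
case/andP => _ /existsP [g /andP [/injectiveP g_inj /forallP g_hom]].
apply/andP; split => //; apply/existsP; exists [ffun x => g (f x)]; apply/andP; split.
  by apply/injectiveP => x y; rewrite !ffunE => /g_inj /f_inj.
apply/forallP => x; apply/forallP => y; rewrite !ffunE.
have /forallP/(_ y)/eqP -> := f_hom x.
by have /forallP/(_ (f y)) := g_hom (f x).
Qed.

Lemma iso_symmetric n : symmetric (@isob n n).
Proof. by move=> G H; apply/idP/idP; apply: iso_sym. Qed.

Lemma iso_transitive n : transitive (@isob n n).
Proof. by move=> H G K; apply: iso_trans. Qed.

Lemma iso_subgraph n m (G : sgraph n) (H : sgraph m) : isob G H -> subgraphb G H.
Proof.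
case/andP => /eqP e; subst m => /existsP [f /andP [f_inj /forallP f_hom]].
apply/existsP; exists f; rewrite f_inj; apply/forallP => x; apply/forallP => y.
by have /forallP/(_ y)/eqP -> := f_hom x; rewrite implybb.
Qed.

Lemma sgraph0_unique (G H : sgraph 0) : G = H.
Proof. by apply: val_inj; apply/ffunP => -[[i ?] ?]. Qed.

(* Mon C is monotone, and it consists exactly of the subgraphs of members of
   C; only the inclusion into the subgraph closure is needed. *)
Definition subgraph_closure (C : gclass) : gclass :=
  fun n H => exists m (G : sgraph m), C m G /\ subgraphb H G.

Lemma subgraph_closure_monotone (C : gclass) : monotone (subgraph_closure C).
Proof.
split.
  move=> n m G H iGH [l [K [CK sGK]]]; exists l, K; split => //.
  exact: subgraph_trans (iso_subgraph (iso_sym iGH)) sGK.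
move=> n k G H sHG [l [K [CK sGK]]]; exists l, K; split => //.
exact: subgraph_trans sHG sGK.
Qed.

Lemma Mon_monotone (C : gclass) : monotone (Mon C).
Proof.
split.
  by move=> n m G H iGH MG D mD CD; exact: (proj1 mD) _ _ G H iGH (MG D mD CD).
by move=> n k G H sHG MG D mD CD; exact: (proj2 mD) _ _ G H sHG (MG D mD CD).
Qed.

Lemma Mon_subgraph_closure (C : gclass) n (H : sgraph n) :
  Mon C H -> subgraph_closure C H.
Proof.
apply; first exact: subgraph_closure_monotone.
by move=> m G CG; exists m, G; split => //; exact: subgraph_refl.
Qed.

Lemma monotone_hereditary (C : gclass) : monotone C -> hereditary C.
Proof.
by case=> isoC subC; split => // n k G H /induced_subgraph; exact: subC.
Qed.

(* Counting equivalence classes: the number of blocks of the partition of A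
   induced by an equivalence relation is the number of classes met by A,
   hence monotone and subadditive in A. *)
Section ClassCount.
Variables (T : finType) (R : rel T).
Hypotheses (R_refl : reflexive R) (R_sym : symmetric R) (R_trans : transitive R).

Let cls x := [set y | R x y].

Let cls_eq x y : R x y -> cls x = cls y.
Proof.
move=> Rxy; apply/setP => z; rewrite !inE; apply/idP/idP => Rz.
  by apply: R_trans Rz; rewrite R_sym.
exact: R_trans Rz.
Qed.

Lemma card_partition_classes (A : {set T}) :
  #|equivalence_partition R A| = #|cls @: A|.
Proof.
have -> : equivalence_partition R A = (fun S => S :&: A) @: (cls @: A).
  rewrite -imset_comp; apply: eq_imset => x /=.
  by apply/setP => y; rewrite !inE andbC.
apply: card_in_imset => S1 S2 /imsetP [x1 _ ->] /imsetP [x2 Ax2 ->] e.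
apply: cls_eq; have : x2 \in cls x2 :&: A by rewrite !inE R_refl Ax2.
by rewrite -e !inE => /andP [].
Qed.

Lemma card_partition_sub (A B : {set T}) : A \subset B ->
  #|equivalence_partition R A| <= #|equivalence_partition R B|.
Proof. by move=> sAB; rewrite !card_partition_classes; apply/subset_leq_card/imsetS. Qed.

Lemma card_partition_U (A B : {set T}) :
  #|equivalence_partition R (A :|: B)| <=
  #|equivalence_partition R A| + #|equivalence_partition R B|.
Proof. by rewrite !card_partition_classes imsetU cardsU leq_subr. Qed.

Lemma card_partition_bigcup (I : finType) (P : {set I}) (B : I -> {set T}) :
  #|equivalence_partition R (\bigcup_(i in P) B i)| <=
  \sum_(i in P) #|equivalence_partition R (B i)|.
Proof.
apply: (big_ind2 (fun S k => #|equivalence_partition R S| <= k)) => //.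
  by rewrite card_partition_classes imset0 cards0.
by move=> S1 S2 k1 k2 h1 h2; apply: leq_trans (card_partition_U _ _) (leq_add h1 h2).
Qed.

End ClassCount.

Definition iso_count n (A : {set sgraph n}) : nat :=
  #|equivalence_partition (@isob n n) A|.

Lemma iso_count_sub n (A B : {set sgraph n}) : A \subset B ->
  (iso_count A <= iso_count B)%N.
Proof. exact: (card_partition_sub (@iso_refl n) (@iso_symmetric n) (@iso_transitive n)). Qed.

Lemma iso_count_bigcup n (I : finType) (P : {set I}) (B : I -> {set sgraph n}) :
  (iso_count (\bigcup_(i in P) B i) <= \sum_(i in P) iso_count (B i))%N.
Proof. exact: (card_partition_bigcup (@iso_refl n) (@iso_symmetric n) (@iso_transitive n) P B). Qed.

Lemma iso_count_U n (A B : {set sgraph n}) :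
  (iso_count (A :|: B) <= iso_count A + iso_count B)%N.
Proof. exact: (card_partition_U (@iso_refl n) (@iso_symmetric n) (@iso_transitive n)). Qed.

Lemma iso_count0 (A : {set sgraph 0}) : (iso_count A <= 1)%N.
Proof.
rewrite /iso_count card_partition_classes; [|exact: iso_refl|exact: iso_symmetric|exact: iso_transitive].
apply: leq_trans (leq_imset_card _ _) _.
have [-> | [G _]] := set_0Vmem A; first by rewrite cards0.
rewrite -(cards1 G); apply/subset_leq_card/subsetP => H _.
by rewrite inE (sgraph0_unique H G).
Qed.

Lemma pbP (P : Prop) : reflect P (pb P).
Proof. by rewrite /pb; case: excluded_middle_informative => h; constructor. Qed.

Local Open Scope R_scope.

Lemma sum_INR_le (I : finType) (P : {set I}) (F : I -> nat) (b : R) :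
  (forall i, i \in P -> INR (F i) <= b) ->
  INR (\sum_(i in P) F i) <= INR #|P| * b.
Proof.
move=> Fb; rewrite -sum1_card.
apply: (big_ind2 (fun s k => INR s <= INR k * b)).
- by simpl; lra.
- by move=> x1 x2 y1 y2 h1 h2; rewrite !plus_INR; lra.
- by move=> i /Fb; simpl; lra.
Qed.

Lemma Rpower_le_geometric g a x n : 0 < g -> a <= x -> x < INR n ->
  Rpower g x <= (Rpower g a + 1) * (g + 1) ^ n.
Proof.
move=> g_pos ax xn.
have ge1 : 1 <= (g + 1) ^ n by apply: pow_R1_Rle; lra.
have ga_pos : 0 < Rpower g a by apply: exp_pos.
case: (Rle_lt_dec 1 g) => g1.
  have gx : Rpower g x <= g ^ n by rewrite -Rpower_pow //; apply: Rle_Rpower; lra.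
  have : g ^ n <= (g + 1) ^ n by apply: pow_incr; lra.
  nra.
have lng : ln g < 0 by rewrite -ln_1; apply: ln_increasing.
suff : Rpower g x <= Rpower g a by nra.
rewrite /Rpower; have [lt|->] : x * ln g < a * ln g \/ x * ln g = a * ln g by nra.
  by apply/Rlt_le/exp_increasing.
exact: Rle_refl.
Qed.

Lemma pow_add_le x y n : 0 <= x -> 0 <= y -> (1 <= n)%N ->
  x ^ n + y ^ n <= (x + y) ^ n.
Proof.
move=> x0 y0; elim: n => // [[|n]] IH _; first by simpl; lra.
have := IH erefl.
change ((x + y) ^ n.+2) with ((x + y) * (x + y) ^ n.+1).
change (x ^ n.+2) with (x * x ^ n.+1); change (y ^ n.+2) with (y * y ^ n.+1).
have := pow_le x n.+1 x0; have := pow_le y n.+1 y0; nra.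
Qed.

Lemma pow_sum_absorb b K g c n : 0 <= b -> 1 <= K -> 0 <= g -> 0 <= c ->
  (1 <= n)%N -> b ^ n + K * g ^ n * c ^ n <= (b + K * g * c) ^ n.
Proof.
move=> b0 K1 g0 c0 n1.
have KKn : K <= K ^ n by rewrite -{1}(pow_1 K); apply: Rle_pow => //; apply/leP.
have gcn : 0 <= g ^ n * c ^ n by apply: Rmult_le_pos; apply: pow_le.
have Kgc : 0 <= K * g * c by apply: Rmult_le_pos; nra.
have : K * g ^ n * c ^ n <= (K * g * c) ^ n by rewrite !Rpow_mult_distr; nra.
have := pow_add_le b0 Kgc n1; lra.
Qed.

Lemma sparse_window_unique (t : nat -> R) (L : nat -> Prop) n l1 l2 :
  t_sparse t L -> L l1 -> L l2 ->
  t l1 < INR n -> (n <= l1)%N -> t l2 < INR n -> (n <= l2)%N -> l1 = l2.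
Proof.
move=> tsp.
wlog lt12 : l1 l2 / (l1 < l2)%N => [hwlog|] L1 L2 t1 n1 t2 n2.
  case: (ltngtP l1 l2) => [lt|lt|//]; first exact: hwlog.
  by symmetry; apply: hwlog.
exfalso; apply: (tsp l1 l2 L1 L2); first by move=> e; rewrite e ltnn in lt12.
split; last exact: ltnW.
by have := le_INR _ _ (leP n1); lra.
Qed.

Section SparseUnion.
Variables (c gamma beta : R) (Y : gclass) (t : nat -> R) (L : nat -> Prop)
  (M : forall l : nat, {set sgraph l}).
Hypotheses (gamma_pos : 0 < gamma)
  (Y_count : forall n, INR (unl_count Y n) <= beta ^ n)
  (t_mono : forall m n : nat, (m <= n)%N -> t m <= t n)
  (t_sp : t_sparse t L)
  (M_tiny : forall l, L l -> forall G : sgraph l, G \in M l -> monotone_tiny_graph c Y t G)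
  (M_card : forall l, L l -> INR #|M l| <= Rpower gamma (t l)).

Let U : gclass := fun n G => L n /\ G \in M n.
(* Constant with gamma^t(l) <= K (gamma+1)^n whenever t(l) < n. *)
Let K := Rpower gamma (t 0%N) + 1.

Let K_ge1 : 1 <= K.
Proof. by have := exp_pos (t 0%N * ln gamma); rewrite /K /Rpower; lra. Qed.

Lemma Mon_union_cases n (H : sgraph n) : (1 <= n)%N -> Mon U H ->
  Y H \/ exists l (G : sgraph l),
    [/\ L l, G \in M l, t l < INR n, (n <= l)%N & subgraphb H G].
Proof.
move=> n1 /Mon_subgraph_closure [l [G [[Ll GM] sHG]]].
case: (Rle_lt_dec (INR n) (t l)) => tl.
  by have [Y_small _] := M_tiny Ll GM; left; exact: Y_small n H n1 tl sHG.
by right; exists l, G; split => //; exact: subgraph_size sHG.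
Qed.

(* The subgraphs of the members of M_l0, for l0 in the window of n, contribute
   at most |M_l0| c^n <= K (gamma+1)^n |c|^n unlabeled n-vertex graphs. *)
Lemma window_count n l0 : L l0 -> t l0 < INR n -> (n <= l0)%N ->
  INR (iso_count (\bigcup_(G in M l0) [set H : sgraph n | subgraphb H G]))
    <= K * (gamma + 1) ^ n * Rabs c ^ n.
Proof.
move=> Ll0 tl0 nl0.
have each G : G \in M l0 ->
    INR (iso_count [set H : sgraph n | subgraphb H G]) <= Rabs c ^ n.
  move=> GM; apply: Rle_trans ((proj2 (M_tiny Ll0 GM)) n tl0 nl0) _.
  by rewrite RPow_abs; exact: Rle_abs.
have card : INR #|M l0| <= K * (gamma + 1) ^ n.
  apply: Rle_trans (M_card Ll0) _; apply: Rpower_le_geometric => //.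
  exact: t_mono.
apply: Rle_trans (le_INR _ _ (leP (iso_count_bigcup _ _))) _.
apply: Rle_trans (sum_INR_le (F := fun G => iso_count _) each) _.
by apply: Rmult_le_compat_r => //; apply: pow_le; exact: Rabs_pos.
Qed.

(* Count of the n-vertex graphs of Mon U, n >= 1: those in Y, plus those in
   the (at most one) sparse window. *)
Lemma layer_count n : (1 <= n)%N ->
  INR (unl_count (Mon U) n) <= Rabs beta ^ n + K * (gamma + 1) ^ n * Rabs c ^ n.
Proof.
move=> n1; set S := [set H : sgraph n | pb (Mon U H)].
set YS := [set H : sgraph n | pb (Y H)].
change (INR (iso_count S) <= Rabs beta ^ n + K * (gamma + 1) ^ n * Rabs c ^ n).
have YS_count : INR (iso_count YS) <= Rabs beta ^ n.
  by apply: Rle_trans (Y_count n) _; rewrite RPow_abs; exact: Rle_abs.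
have window_nonneg : 0 <= K * (gamma + 1) ^ n * Rabs c ^ n.
  have cn := pow_le _ n (Rabs_pos c).
  have gn : 0 <= (gamma + 1) ^ n by apply: pow_le; lra.
  by apply: Rmult_le_pos => //; apply: Rmult_le_pos; lra.
have [[l0 [Ll0 [tl0 nl0]]] | no_window] :=
  classic (exists l0, L l0 /\ t l0 < INR n /\ (n <= l0)%N).
  set W := \bigcup_(G in M l0) [set H : sgraph n | subgraphb H G].
  have SW : S \subset YS :|: W.
    apply/subsetP => H; rewrite inE => /pbP /(Mon_union_cases n1).
    case=> [YH | [l [G [Ll GM tl nl sHG]]]]; first by rewrite !inE; apply/orP; left; apply/pbP.
    have el := sparse_window_unique t_sp Ll Ll0 tl nl tl0 nl0; subst l.
    by rewrite inE; apply/orP; right; apply/bigcupP; exists G; rewrite ?inE.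
  have W_count : INR (iso_count W) <= _ := window_count Ll0 tl0 nl0.
  have := le_INR _ _ (leP (leq_trans (iso_count_sub SW) (iso_count_U YS W))).
  by rewrite plus_INR; lra.
have SY : S \subset YS.
  apply/subsetP => H; rewrite inE => /pbP /(Mon_union_cases n1).
  case=> [YH | [l [G [Ll GM tl nl _]]]]; first by rewrite inE; apply/pbP.
  by case: no_window; exists l.
by have := le_INR _ _ (leP (iso_count_sub SY)); lra.
Qed.

Lemma Mon_union_growth n :
  INR (unl_count (Mon U) n) <= (Rabs beta + K * (gamma + 1) * Rabs c) ^ n.
Proof.
case: n => [|n]; first by have := le_INR _ _ (leP (iso_count0 [set G | pb (Mon U G)])).
apply: Rle_trans (layer_count _) _ => //.
apply: pow_sum_absorb => //; [exact: Rabs_pos | lra | exact: Rabs_pos].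
Qed.

End SparseUnion.

Theorem mainTheorem14 (c gamma : R) (Y : gclass) (t : nat -> R)
  (L : nat -> Prop) (M : forall l : nat, {set sgraph l}) :
  Rlt 0 gamma ->
  tiny Y ->
  (forall m n : nat, (m <= n)%N -> Rle (t m) (t n)) ->
  (forall B : R, exists n : nat, Rlt B (t n)) ->
  (forall n : nat, Rle (t n) (INR n)) ->
  (forall N : nat, exists l, (N <= l)%N /\ L l) ->
  t_sparse t L ->
  (forall l, L l -> forall G : sgraph l, G \in M l -> monotone_tiny_graph c Y t G) ->
  (forall l, L l -> Rle (INR #|M l|) (Rpower gamma (t l))) ->
  let U : gclass := fun n G => L n /\ G \in M n in
  monotone (Mon U) /\ tiny (Mon U).
Proof.
move=> gamma_pos [_ [beta Y_count]] t_mono _ _ _ t_sp M_tiny M_card U.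
split; first exact: Mon_monotone.
split; first exact/monotone_hereditary/Mon_monotone.
eexists; exact: Mon_union_growth gamma_pos Y_count t_mono t_sp M_tiny M_card.
Qed.
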